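(* For every integer $n>1$, $$\delta_C(n,0) \geqslant \frac{4 - 2\sin(\pi/n)}{2\sin(\pi/n)} \geqslant \frac{2n}{\pi} - 1.$$
   Context: For a graph $G$ whose vertices are points in $\mathbb{R}^D$, each edge $(u,v)$ has weight equal to the Euclidean distance $d(u,v)$, and $d_G(u,v)$ is the length of a shortest path in $G$ between $u$ and $v$. The dilation of $G$ is $\Delta(G)=\max_{u\neq v\in V(G)} d_G(u,v)/d(u,v)$ (infinite if $G$ is disconnected). For a finite set $S$ of $n$ points and an integer $k\ge 0$, $\Delta(S,k)$ is the minimum of $\Delta(G)$ over all graphs $G$ with vertex set exactly $S$ and exactly $n-1+k$ edges. $\delta_C(n,k)$ is the supremum of $\Delta(S,k)$ over all sets $S$ of $n$ points in $\mathbb{R}^2$ in convex position (all points lie on the boundary of their convex hull). *)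

From HB Require Import structures.
From mathcomp Require Import all_boot all_order all_algebra.
From mathcomp Require Import all_classical all_reals all_analysis.
Set Implicit Arguments. Unset Strict Implicit. Unset Printing Implicit Defensive.
Import Order.TTheory GRing.Theory Num.Theory.
Local Open Scope classical_set_scope.
Local Open Scope ring_scope.

Section GeomGraph.
Variable R : realType.

Definition pt := (R * R)%type.

Definition edist (a b : pt) : R :=
  Num.sqrt ((a.1 - b.1) ^+ 2 + (a.2 - b.2) ^+ 2).

Variable n : nat.

Definition in_hull (p : 'I_n -> pt) (q : pt) : Prop :=
  exists lam : 'I_n -> R,
    (forall j, 0 <= lam j) /\ \sum_j lam j = 1 /\
    q = (\sum_j lam j * (p j).1, \sum_j lam j * (p j).2).

(* every point lies on the boundary of the convex hull, i.e. is not an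
   interior point of the (closed) convex hull *)
Definition convex_position (p : 'I_n -> pt) : Prop :=
  forall i, ~ exists e : R, 0 < e /\
    forall q : pt, edist q (p i) < e -> in_hull p q.

Definition is_graph (E : {set {set 'I_n}}) : Prop :=
  forall e, e \in E -> #|e| = 2%N.

Definition adj (E : {set {set 'I_n}}) (a b : 'I_n) : bool := (finset.setU (finset.set1 a) (finset.set1 b)) \in E.

Fixpoint walk_len (p : 'I_n -> pt) (a : 'I_n) (s : seq 'I_n) : R :=
  match s with
  | [::] => 0
  | b :: t => edist (p a) (p b) + walk_len p b t
  end.

(* shortest-path distance d_G(u,v) (+oo if no path) *)
Definition dG (p : 'I_n -> pt) (E : {set {set 'I_n}}) (u v : 'I_n) : \bar R :=
  ereal_inf [set (walk_len p u s)%:E |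
               s in [set s : seq 'I_n | path (adj E) u s /\ last u s = v]].

Definition dilation (p : 'I_n -> pt) (E : {set {set 'I_n}}) : \bar R :=
  ereal_sup [set (dG p E uv.1 uv.2 * ((edist (p uv.1) (p uv.2))^-1)%:E)%E |
               uv in [set uv : 'I_n * 'I_n | uv.1 != uv.2]].

Definition Delta (p : 'I_n -> pt) (k : nat) : \bar R :=
  ereal_inf [set dilation p E |
    E in [set E : {set {set 'I_n}} | is_graph E /\ #|E| = (n - 1 + k)%N]].

Definition deltaC (k : nat) : \bar R :=
  ereal_sup [set Delta p k |
    p in [set p : 'I_n -> pt | injective p /\ convex_position p]].

End GeomGraph.

(* Place the n points at the vertices of a regular n-gon inscribed in the unit circle,
   whose sides have length 2 sin(pi/n). Give each edge ab of a graph its signed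
   number of sides d(a,b) along the shorter arc; a chord spanning |d| sides has
   length at least 4|d|/n by Jordan's inequality, so a walk of total winding w has
   length at least 4|w|/n. A walk from i to i+1 has winding congruent to 1 mod n.
   A graph with n - 1 edges in which every pair i, i+1 is joined by a walk of
   winding 1 is a tree, on which winding is a difference of potentials; summing
   around the polygon gives 0 = n. Hence for some i every walk from i to i+1 has
   winding of absolute value at least n - 1, so d_G(i, i+1) >= 4 - 4/n and the
   dilation is at least (4 - 4/n) / (2 sin(pi/n)). Both inequalities of the
   statement follow from 2/n <= sin(pi/n) <= pi/n. *)

From Pilot Require Import Defs.
From HB Require Import structures.
From mathcomp Require Import all_boot all_order all_algebra.
From mathcomp Require Import all_classical all_reals all_analysis.
From mathcomp Require Import zify ring lra.
Set Implicit Arguments. Unset Strict Implicit. Unset Printing Implicit Defensive.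
Import Order.TTheory GRing.Theory Num.Theory.
Import numFieldNormedType.Exports.

Local Open Scope ring_scope.
Local Notation edist := Defs.edist. (* not the extended distance of mathcomp-analysis *)

Section TreePotential.
Variable T : finType.
Implicit Types (S : {set T}) (F : {set {set T}}).

Definition erel F : rel T := fun a b => [set a; b] \in F.

Definition graph_on S F : Prop := {in F, forall e : {set T}, #|e| = 2%N /\ e \subset S}.

Definition graph_connected S F : Prop := {in S &, forall x y, connect (erel F) x y}.

Definition degree F v : nat := #|[set e in F | v \in e]|.

Lemma erel_sym F : symmetric (erel F).
Proof. by move=> a b; rewrite /erel finset.setUC. Qed.

Lemma handshake S F : graph_on S F -> (\sum_(v in S) degree F v = 2 * #|F|)%N.
Proof.
move=> gF.
transitivity (\sum_(v in S) \sum_(e in F) (v \in e : nat))%N.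
  apply: eq_bigr => v _; rewrite /degree -sum1_card big_mkcond [RHS]big_mkcond /=.
  by apply: eq_bigr => e _; rewrite !inE; case: (e \in F); case: (v \in e).
rewrite exchange_big /= mulnC -sum_nat_const; apply: eq_bigr => e eF.
have [<- eS] := gF e eF; rewrite -sum1_card big_mkcond [RHS]big_mkcond /=.
apply: eq_bigr => v _; case ve: (v \in e) => /=; last by case: (v \in S).
by rewrite (fintype.subsetP eS v ve).
Qed.

Lemma degree_gt0 S F v : graph_connected S F -> (1 < #|S|)%N -> v \in S ->
  (0 < degree F v)%N.
Proof.
move=> cF S2 vS; have : (0 < #|S :\ v|)%N by rewrite (cardsD1 v S) vS in S2.
case/card_gt0P => w; rewrite !inE => /andP[wv wS].
have /connectP[[|a p] /= vp wE] := cF v w vS wS; first by rewrite wE eqxx in wv.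
case/andP: vp => va _; apply/card_gt0P; exists [set v; a].
by rewrite !inE eqxx andbT.
Qed.

Lemma exists_leaf S F : graph_on S F -> graph_connected S F ->
  (#|F| < #|S|)%N -> (1 < #|S|)%N -> exists2 v, v \in S & degree F v = 1%N.
Proof.
move=> gF cF FS S2.
suff /exists_inP[v vS /eqP] : [exists v in S, degree F v == 1%N] by exists v.
apply: contraTT FS => /exists_inPn deg_ne1.
rewrite -leqNgt -(leq_pmul2l (isT : 0 < 2)%N) -(handshake gF) mulnC -sum_nat_const.
apply: leq_sum => v vS; have := degree_gt0 cF S2 vS; have /negP := deg_ne1 v vS.
by case: (degree F v) => [|[|m]].
Qed.

Lemma leaf_neighbour S F v : graph_on S F -> degree F v = 1%N ->
  exists u, [/\ u != v, [set v; u] \in F & forall a, [set v; a] \in F -> a = u].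
Proof.
move=> gF /eqP/cards1P[e0 Ev].
have e0in : e0 \in [set e in F | v \in e] by rewrite Ev set11.
have only_e0 a : [set v; a] \in F -> [set v; a] = e0.
  by move=> vaF; apply/set1P; rewrite -Ev inE vaF set21.
rewrite inE in e0in; case/andP: e0in => e0F ve0.
have [/eqP/cards2P[x [y [xy e0E]]] _] := gF e0 e0F.
have [u [uv e0_vu]] : exists u, u != v /\ e0 = [set v; u].
  move: ve0 xy; rewrite e0E !inE => /orP[]/eqP<- xy.
    by exists y; rewrite eq_sym xy.
  by exists x; rewrite xy finset.setUC.
exists u; split=> //; first by rewrite -e0_vu.
move=> a /only_e0; rewrite e0_vu => vau.
have : a \in [set v; u] by rewrite -vau set22.
rewrite !inE => /orP[/eqP av|/eqP //]; subst a.
have [+ _] := gF _ e0F; rewrite e0_vu -vau finset.setUid cards1 //.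
Qed.

Section LeafRemoval.
Variables (S : {set T}) (F : {set {set T}}) (v u : T).
Hypothesis gF : graph_on S F.
Hypothesis u_only : forall a, [set v; a] \in F -> a = u.

Lemma graph_on_del_leaf : graph_on (S :\ v) (F :\ [set v; u]).
Proof.
move=> e; rewrite !inE => /andP[e_ne eF]; have [e2 eS] := gF eF; split=> //.
apply/fintype.subsetP => x xe; rewrite !inE (fintype.subsetP eS x xe) andbT.
apply: contraNN e_ne => /eqP xv; subst x.
have /eqP/cards2P[a [b [_ eE]]] := e2; subst e.
move: xe; rewrite !inE => /orP[]/eqP va; subst; first by rewrite (u_only eF).
by rewrite finset.setUC in eF *; rewrite (u_only eF).
Qed.

Lemma graph_connected_del_leaf :
  graph_connected S F -> graph_connected (S :\ v) (F :\ [set v; u]).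
Proof.
move=> cF x y; rewrite !inE => /andP[xv xS] /andP[yv yS].
have /connectP[p0 p0F y_last] := cF x y xS yS.
case: (shortenP p0F) y_last => p pF p_uniq _ y_last.
have v_notin : v \notin x :: p.
  rewrite inE negb_or eq_sym xv /=; apply/negP => vp.
  move: vp pF p_uniq y_last; case/splitPr => p1 [|b p2].
    by rewrite last_cat /= => _ _ yE; rewrite yE eqxx in yv.
  rewrite cat_path /= => /and4P[_ av vb _] p_uniq _.
  have bu : b = u := u_only vb.
  have au : last x p1 = u by apply: u_only; rewrite erel_sym in av.
  have : uniq ((x :: p1) ++ [:: v, b & p2]) := p_uniq.
  rewrite cat_uniq => /and3P[_ /hasP[]]; exists b.
    by rewrite !inE eqxx orbT.
  by rewrite bu -au mem_last.
apply/connectP; exists p => //.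
apply: (@sub_in_path _ (predC1 v) (erel F)) => //.
  move=> a b; rewrite /erel !inE /= => av bv ab; rewrite ab andbT.
  have : v \notin [set a; b] by rewrite !inE negb_or ![v == _]eq_sym av bv.
  by apply: contraNneq => ->; rewrite set21.
by apply/allP => z zp /=; apply: contraNneq v_notin => <-.
Qed.

End LeafRemoval.

Lemma tree_potential (V : zmodType) (d : T -> T -> V) :
  (forall a b, d b a = - d a b) ->
  forall S F, graph_on S F -> graph_connected S F -> (#|F| < #|S|)%N ->
  exists phi : T -> V, forall a b, [set a; b] \in F -> phi b = phi a + d a b.
Proof.
move=> dN S F; have [k] := ubnP #|S|; elim: k S F => // k IH S F Sk gF cF FS.
have [S1|S2] := leqP #|S| 1.
  exists (fun=> 0) => a b; rewrite (_ : F = finset.set0) ?inE //.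
  by apply: cards0_eq; move: FS S1; lia.
have [v vS /(leaf_neighbour gF)[u [uv vuF u_only]]] := exists_leaf gF cF FS S2.
have Sk' : (#|S :\ v| < k)%N by move: Sk; rewrite (cardsD1 v S) vS; lia.
have FS' : (#|F :\ [set v; u]| < #|S :\ v|)%N.
  by move: FS; rewrite (cardsD1 v S) (cardsD1 [set v; u] F) vS vuF.
have [phi phiP] := IH _ _ Sk' (graph_on_del_leaf gF u_only)
  (graph_connected_del_leaf u_only cF) FS'.
exists (fun t => if t == v then phi u + d u v else phi t) => a b.
have [-> vbF|av] := eqVneq a v.
  by rewrite (u_only _ vbF) (negbTE uv) -addrA [d v u]dN subrr addr0.
have [-> avF|bv abF] := eqVneq b v.
  by rewrite finset.setUC in avF; rewrite (u_only _ avF).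
apply: phiP; rewrite !inE abF andbT.
have : v \notin [set a; b] by rewrite !inE negb_or ![v == _]eq_sym av bv.
by apply: contraNneq => ->; rewrite set21.
Qed.

End TreePotential.

Section Trigonometry.
Variable R : realType.
Implicit Types x t : R.
Local Open Scope classical_set_scope.

Lemma sin_le_id x : 0 <= x -> sin x <= x.
Proof.
rewrite le_eqVlt => /orP[/eqP <-|x0]; first by rewrite sin0.
have sin_cont : {within `[0, x], continuous (@sin R)}.
  by apply/continuous_subspaceT => ?; exact: continuous_sin.
have [c _] := MVT x0 (fun c _ => is_derive_sin c) sin_cont.
rewrite sin0 !subr0 => ->.
exact: ler_piMl (ltW x0) (cos_le1 c).
Qed.

(* [h := sin - (2/pi) id] vanishes at 0 and pi/2; if [h x < 0], the mean value
   theorem on [0, x] and on [x, pi/2] gives c1 < c2 with cos c1 < 2/pi < cos c2,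
   contradicting the decrease of cos. *)
Lemma jordan_sin x : 0 <= x <= pi / 2 -> 2 / pi * x <= sin x.
Proof.
move=> /andP[x0 xpi2]; have pi0 := pi_gt0 R.
have pi2_le_pi : pi / 2 <= pi :> R by lra.
pose k : R := 2 / pi; pose h y := sin y - k * y.
have h' (y : R) : is_derive y 1 h (cos y - k).
  apply: is_deriveB; rewrite (_ : *%R k = k \*: id) // -[X in is_derive _ _ _ X]mulr1.
  exact: is_deriveZ.
have h_cont a b : {within `[a, b], continuous h}.
  by apply: derivable_within_continuous => z _; apply: ex_derive; exact: h'.
have h0 : h 0 = 0 by rewrite /h sin0 mulr0 subr0.
have hpi2 : h (pi / 2) = 0.
  by rewrite /h sin_pihalf /k mulrA divfK ?gt_eqF // divff ?gt_eqF // subrr.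
rewrite -subr_ge0 -/(h x).
move: x0 xpi2; rewrite le_eqVlt => /orP[/eqP<- _|x0]; first by rewrite h0.
rewrite le_eqVlt => /orP[/eqP->|xpi2]; first by rewrite hpi2.
rewrite leNgt; apply/negP => hx.
have [c1 /andP[c10 c1x] hc1] := MVT x0 (fun c _ => h' c) (h_cont 0 x).
have [c2 /andP[c2x c2pi2] hc2] := MVT xpi2 (fun c _ => h' c) (h_cont x (pi / 2)).
have cos_c1 : cos c1 < k.
  by move: hc1; rewrite h0 !subr0 -subr_lt0 => hc1; rewrite -(pmulr_llt0 _ x0) -hc1.
have cos_c2 : k < cos c2.
  have xpi2' : 0 < pi / 2 - x by rewrite subr_gt0.
  move: hc2; rewrite hpi2 sub0r => hc2.
  by rewrite -subr_gt0 -(pmulr_lgt0 _ xpi2') -hc2 oppr_gt0.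
have : cos c2 < cos c1.
  rewrite ltr_cos ?in_itv /= ?(lt_trans c1x c2x) //.
    by rewrite (ltW c10) (le_trans (ltW (lt_trans c1x xpi2))).
  by rewrite (ltW (lt_trans x0 c2x)) (le_trans (ltW c2pi2)).
by move: cos_c1 cos_c2; lra.
Qed.

Lemma jordan_sin_norm t : `|t| <= pi / 2 -> 2 / pi * `|t| <= `|sin t|.
Proof.
wlog t0 : t / 0 <= t.
  move=> Ht; have [/Ht//|/ltW] := lerP 0 t.
  by rewrite -oppr_ge0 -normrN -[`|sin t|]normrN -sinN => /Ht.
move=> tpi2; rewrite ger0_norm // in tpi2 *.
by apply: le_trans (ler_norm _); rewrite jordan_sin // t0.
Qed.

End Trigonometry.

Section UnitCircle.
Variable R : realType.

Lemma edist_circle (x y : R) :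
  edist (cos (x *+ 2), sin (x *+ 2)) (cos (y *+ 2), sin (y *+ 2)) =
  2 * `|sin (x - y)|.
Proof.
have chord2 : (cos (x *+ 2) - cos (y *+ 2)) ^+ 2 + (sin (x *+ 2) - sin (y *+ 2)) ^+ 2
    = (2 * sin (x - y)) ^+ 2.
  rewrite exprMn sin2cos2; have := cos_mulr2n (x - y); rewrite mulrnBl (cosB (x *+ 2)).
  by have := cos2Dsin2 (x *+ 2); have := cos2Dsin2 (y *+ 2); nra.
by rewrite /edist /= chord2 sqrtr_sqr normrM ger0_norm.
Qed.

Lemma sqr_convex_comb (I : finType) (lam x : I -> R) :
  (forall j, 0 <= lam j) -> \sum_j lam j = 1 ->
  (\sum_j lam j * x j) ^+ 2 <= \sum_j lam j * x j ^+ 2.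
Proof.
move=> lam_ge0 lam1; set m := \sum_j lam j * x j.
have : 0 <= \sum_j lam j * (x j - m) ^+ 2.
  by apply: sumr_ge0 => j _; rewrite mulr_ge0 // sqr_ge0.
rewrite (eq_bigr (fun j => lam j * x j ^+ 2 - m *+ 2 * (lam j * x j) + m ^+ 2 * lam j));
  last by move=> j _; ring.
by rewrite big_split sumrB /= -!mulr_sumr lam1 -/m; nra.
Qed.

(* A point of the unit circle is not interior to the hull of points of the
   circle: pushing it outward along its radius leaves the unit disk. *)
Lemma circle_convex_position n (p : 'I_n -> pt R) :
  (forall i, (p i).1 ^+ 2 + (p i).2 ^+ 2 = 1) -> convex_position p.
Proof.
move=> p_unit i [e [e0 hull_ball]].
pose t := e / 2; have t0 : 0 < t by rewrite divr_gt0.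
pose q : pt R := ((1 + t) * (p i).1, (1 + t) * (p i).2).
have q_norm : q.1 ^+ 2 + q.2 ^+ 2 = (1 + t) ^+ 2.
  by rewrite !exprMn -mulrDr p_unit mulr1.
have [|lam [lam_ge0 [lam1 qE]]] := hull_ball q.
  rewrite /edist (_ : _ + _ = t ^+ 2 * ((p i).1 ^+ 2 + (p i).2 ^+ 2)) /=; last by ring.
  by rewrite p_unit mulr1 sqrtr_sqr gtr0_norm // /t; lra.
have : q.1 ^+ 2 + q.2 ^+ 2 <= 1.
  rewrite qE /=; apply: le_trans (lerD (sqr_convex_comb _ lam_ge0 lam1)
    (sqr_convex_comb _ lam_ge0 lam1)) _.
  by rewrite -big_split -lam1; apply: ler_sum => j _ /=; rewrite -mulrDr p_unit mulr1.
by rewrite q_norm; nra.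
Qed.

End UnitCircle.

Lemma connect_ordS n (e : rel 'I_n) : symmetric e ->
  (forall i, connect e i (ordS i)) -> forall x y, connect e x y.
Proof.
case: n e => [|m] e e_sym e_ordS; first by case.
suff from0 j : connect e ord0 j.
  by move=> x y; rewrite (connect_trans _ (from0 y)) // (sym_connect_sym e_sym).
case: j => j; elim: j => [|j IH] jn; first by rewrite (_ : Ordinal jn = ord0) //; exact: val_inj.
apply: connect_trans (IH (ltnW jn)) _.
by rewrite (_ : Ordinal jn = ordS (Ordinal (ltnW jn))) //; apply: val_inj; rewrite /= modn_small.
Qed.

Section RegularPolygon.
Variables (R : realType) (n : nat).
Implicit Types a b i : 'I_n.

Definition polygon (k : 'I_n) : pt R :=
  (cos (pi * k%:R / n%:R *+ 2), sin (pi * k%:R / n%:R *+ 2)).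

(* The representative of [b - a] modulo [n] in [-n/2, n/2]: the signed number of
   sides along the shorter arc of the polygon from vertex [a] to vertex [b]. *)
Definition cyc_diff (a b : 'I_n) : int :=
  let z := b%:Z - a%:Z in
  if n%:Z < 2 * z then z - n%:Z else if 2 * z < - n%:Z then z + n%:Z else z.

Lemma cyc_diffN a b : cyc_diff b a = - cyc_diff a b.
Proof.
by rewrite /cyc_diff; case: ifP => h1; last case: ifP => h2; case: ifP => h3;
  try case: ifP => h4; lia.
Qed.

Lemma cyc_diff_bound a b : - n%:Z <= 2 * cyc_diff a b <= n%:Z.
Proof.
rewrite /cyc_diff; have := ltn_ord a; have := ltn_ord b.
by case: ifP => h1; last case: ifP => h2; lia.
Qed.

Lemma cyc_diff_congr a b : [\/ b%:Z - a%:Z = cyc_diff a b,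
  b%:Z - a%:Z = cyc_diff a b + n%:Z | b%:Z - a%:Z = cyc_diff a b - n%:Z].
Proof.
rewrite /cyc_diff; case: ifP => _; last case: ifP => _.
- by apply: Or32; lia.
- by apply: Or33; lia.
- by apply: Or31.
Qed.

Lemma ord_natr_gt0 a : 0 < n%:R :> R.
Proof. by rewrite ltr0n (leq_ltn_trans _ (ltn_ord a)). Qed.

Lemma edist_polygon a b :
  edist (polygon a) (polygon b) = 2 * `|sin (pi * (cyc_diff a b)%:~R / n%:R)|.
Proof.
rewrite edist_circle; congr (2 * _).
have n_neq0 : n%:R != 0 :> R by rewrite gt_eqF // (ord_natr_gt0 a).
set t := pi * (cyc_diff a b)%:~R / n%:R.
have angle (c : R) : (b%:R - a%:R : R) = (cyc_diff a b)%:~R + c * n%:R ->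
    `|sin (pi * a%:R / n%:R - pi * b%:R / n%:R)| = `|sin (t + c * pi)|.
  move=> ba; rewrite (_ : _ - _ = - (pi * (b%:R - a%:R) / n%:R)); last by field.
  by rewrite sinN normrN ba /t; congr (`|sin _|); field.
have congr_int (z : int) : b%:Z - a%:Z = z -> (b%:R - a%:R : R) = z%:~R.
  by move=> <-; rewrite intrB.
have [/congr_int|/congr_int|/congr_int] := cyc_diff_congr a b;
  rewrite ?intrB ?intrD => ba.
- by rewrite (angle 0) ?mul0r ?addr0.
- by rewrite (angle 1) ?mul1r ?sinDpi ?normrN //; exact: ba.
- rewrite (angle (-1)) ?mulN1r; last exact: ba.
  by rewrite -[in RHS](subrK pi t) sinDpi normrN.
Qed.

Lemma edist_polygon_ge a b :
  4 / n%:R * `|(cyc_diff a b)%:~R| <= edist (polygon a) (polygon b).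
Proof.
have n0 := ord_natr_gt0 a; have pi0 := pi_gt0 R.
have [n_neq0 pi_neq0] := (lt0r_neq0 n0, lt0r_neq0 pi0).
rewrite edist_polygon; set t := pi * _ / _; set d := `|_|.
have d_le : d <= n%:R / 2.
  rewrite ler_norml; have := cyc_diff_bound a b.
  by rewrite -!(ler_int R) intrM intrN => /andP[lo hi]; apply/andP; split; lra.
have t_norm : `|t| = pi / n%:R * d.
  by rewrite /t !normrM normfV (ger0_norm (ltW pi0)) (ger0_norm (ltW n0)) mulrAC.
have t_le : `|t| <= pi / 2.
  have -> : pi / 2 = pi / n%:R * (n%:R / 2) :> R by rewrite mulrA divfK.
  by rewrite t_norm ler_wpM2l // divr_ge0 // ltW.
have := jordan_sin_norm t_le; rewrite t_norm mulrA [2 / pi * _]mulrA mulfVK //.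
lra.
Qed.

Lemma polygon_inj : injective polygon.
Proof.
move=> a b ab; have := edist_polygon_ge a b; rewrite ab.
rewrite /edist !subrr expr0n /= addr0 sqrtr0 pmulr_rle0 ?divr_gt0 ?(ord_natr_gt0 a) //.
rewrite normr_le0 intr_eq0 => /eqP d0.
apply: val_inj => /=; have := ltn_ord a; have := ltn_ord b.
by case: (cyc_diff_congr a b); rewrite d0; lia.
Qed.

Lemma polygon_convex : convex_position polygon.
Proof. by apply: circle_convex_position => i; rewrite cos2Dsin2. Qed.

Fixpoint winding (a : 'I_n) (s : seq 'I_n) : int :=
  if s is b :: t then cyc_diff a b + winding b t else 0.

Lemma walk_len_ge_winding a s :
  4 / n%:R * `|(winding a s)%:~R| <= walk_len polygon a s.
Proof.
have c_ge0 : 0 <= 4 / n%:R :> R by rewrite divr_ge0.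
elim: s a => [|b s IH] a /=; first by rewrite normr0 mulr0.
rewrite intrD; apply: le_trans (ler_wpM2l c_ge0 (ler_normD _ _)) _.
by rewrite mulrDr lerD ?edist_polygon_ge.
Qed.

Lemma winding_congr a s : exists K : int, winding a s = (last a s)%:Z - a%:Z + K * n%:Z.
Proof.
elim: s a => [|b s IH] a /=; first by exists 0; rewrite subrr mul0r addr0.
have [K ->] := IH b.
by case: (cyc_diff_congr a b) => ba; [exists K | exists (K - 1) | exists (K + 1)]; lia.
Qed.

Lemma winding_potential (E : {set {set 'I_n}}) (phi : 'I_n -> int) :
  (forall a b, [set a; b] \in E -> phi b = phi a + cyc_diff a b) ->
  forall a s, path (adj E) a s -> winding a s = phi (last a s) - phi a.
Proof.
move=> phiP a s; elim: s a => [|b s IH] a /=; first by rewrite subrr.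
by case/andP=> ab bs; rewrite IH // (phiP a b ab); lia.
Qed.

Section AtLeastTwoVertices.
Hypothesis n_gt1 : (1 < n)%N.

Let n_gt0 : 0 < n%:R :> R.
Proof. by rewrite ltr0n ltnW. Qed.

Lemma sin_pi_div_gt0 : 0 < sin (pi / n%:R) :> R.
Proof.
have pi0 := pi_gt0 R; apply: sin_gt0_pi.
by rewrite divr_gt0 //= ltr_pdivrMr // ltr_pMr // ltr1n.
Qed.

Lemma sin_pi_div_ge : 2 / n%:R <= sin (pi / n%:R) :> R.
Proof.
have pi0 := pi_gt0 R.
have <- : 2 / pi * (pi / n%:R) = 2 / n%:R :> R by rewrite mulrA mulfVK ?lt0r_neq0.
apply: jordan_sin; rewrite divr_ge0 ?(ltW pi0) //=.
by rewrite ler_pM2l // lef_pV2 ?posrE // ler_nat.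
Qed.

Lemma cyc_diff_ordS i : cyc_diff i (ordS i) = 1 \/ cyc_diff i (ordS i) = -1.
Proof.
rewrite /cyc_diff /=; have := ltn_ord i; rewrite leq_eqVlt => /orP[/eqP iE|lt_in].
  by rewrite iE modnn; case: ifP => h1; last case: ifP => h2; lia.
by rewrite modn_small //; case: ifP => h1; last case: ifP => h2; lia.
Qed.

Lemma ordS_neq i : i != ordS i.
Proof.
apply/eqP => iE; have := cyc_diff_ordS i; rewrite -iE /cyc_diff.
by case: ifP => _; last case: ifP => _; lia.
Qed.

Lemma edist_polygon_ordS i : edist (polygon i) (polygon (ordS i)) = 2 * sin (pi / n%:R).
Proof.
rewrite edist_polygon; have s_ge0 := ltW sin_pi_div_gt0.
by case: (cyc_diff_ordS i) => ->; rewrite ?mulrN1z ?mulr1z ?mulrN ?mulNr ?sinN ?normrN mulr1 ger0_norm.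
Qed.

Lemma winding_ordS_ge i s : last i s = ordS i -> winding i s != 1 ->
  n%:R - 1 <= `|(winding i s)%:~R| :> R.
Proof.
move=> s_last; have [K ->] : exists K : int, winding i s = 1 + K * n%:Z.
  have [K] := winding_congr i s; rewrite s_last /=.
  have := ltn_ord i; rewrite leq_eqVlt => /orP[/eqP iE|lt_in].
    by rewrite iE modnn => ->; exists (K - 1); lia.
  by rewrite modn_small // => ->; exists K; lia.
have -> : n%:R - 1 = (n%:Z - 1)%:~R :> R by rewrite intrB.
rewrite -intr_norm ler_int ler_normr => K_ne0.
have [K_lt0|K_gt0] : (K <= -1) \/ (1 <= K) by move: K_ne0; lia.
  by apply/orP; right; nia.
by apply/orP; left; nia.
Qed.

Lemma dG_polygon_ge (E : {set {set 'I_n}}) i :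
  (forall s, path (adj E) i s -> last i s = ordS i -> winding i s != 1) ->
  ((4 - 4 / n%:R)%:E <= dG polygon E i (ordS i))%E.
Proof.
move=> no_unit_winding; apply: le_ereal_inf_tmp => _ [s [i_s s_last] <-].
rewrite lee_fin; apply: le_trans (walk_len_ge_winding i s).
have -> : 4 - 4 / n%:R = 4 / n%:R * (n%:R - 1) :> R by field; rewrite lt0r_neq0.
by rewrite ler_wpM2l ?divr_ge0 ?winding_ordS_ge ?no_unit_winding.
Qed.

Lemma exists_winding_ne1 (E : {set {set 'I_n}}) : is_graph E -> #|E| = (n - 1)%N ->
  exists i, forall s, path (adj E) i s -> last i s = ordS i -> winding i s != 1.
Proof.
move=> gE cardE; apply: contrapT => unit_windings.
have unit_path i : exists s, [/\ path (adj E) i s, last i s = ordS i & winding i s = 1].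
  apply: contrapT => no_path; apply: unit_windings; exists i => s i_s s_last.
  by apply/eqP => w1; apply: no_path; exists s.
have conn : graph_connected [set: 'I_n] E.
  move=> x y _ _; apply: connect_ordS => [a b|j]; first exact: erel_sym.
  by have [s [i_s s_last _]] := unit_path j; apply/connectP; exists s.
have gE' : graph_on [set: 'I_n] E by move=> e eE; rewrite gE ?subsetT.
have E_lt : (#|E| < #|[set: 'I_n]|)%N by rewrite cardE cardsT card_ord; lia.
have [phi phiP] := tree_potential cyc_diffN gE' conn E_lt.
have phi_ordS i : phi (ordS i) = phi i + 1.
  have [s [i_s s_last w1]] := unit_path i.
  by have := winding_potential phiP i_s; rewrite w1 s_last; lia.
have : \sum_i phi i = \sum_i phi (ordS i) := reindex_inj (@ordS_inj n).
rewrite (eq_bigr _ (fun i _ => phi_ordS i)) big_split /= sumr_const card_ord.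
by rewrite -[X in X = _]addr0 => /addrI/eqP; rewrite eq_sym pnatr_eq0; lia.
Qed.

Lemma Delta_polygon_ge :
  (((4 - 4 / n%:R) / (2 * sin (pi / n%:R)))%:E <= Delta polygon 0)%E.
Proof.
apply: le_ereal_inf_tmp => _ [E [gE cardE] <-]; rewrite addn0 in cardE.
have [i no_unit_winding] := exists_winding_ne1 gE cardE.
apply: le_trans (ereal_sup_ubound _); last by exists (i, ordS i) => //=; rewrite ordS_neq.
rewrite /= edist_polygon_ordS EFinM lee_wpmul2r ?dG_polygon_ge //.
by rewrite lee_fin invr_ge0 mulr_ge0 // ltW // sin_pi_div_gt0.
Qed.

End AtLeastTwoVertices.

End RegularPolygon.

Theorem corollary1 (R : realType) (n : nat) (hn : (1 < n)%N) :
  (((4 - 2 * sin (pi / n%:R)) / (2 * sin (pi / n%:R)))%:E <= deltaC R n 0)%E /\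
  2 * n%:R / pi - 1 <= (4 - 2 * sin (pi / n%:R)) / (2 * sin (pi / n%:R)) :> R.
Proof.
have n_gt0 : 0 < n%:R :> R by rewrite ltr0n ltnW.
have pi_gt0 := pi_gt0 R.
have s_gt0 := sin_pi_div_gt0 R hn; have s_ge := sin_pi_div_ge R hn.
have s_le : sin (pi / n%:R) <= pi / n%:R :> R by rewrite sin_le_id // divr_ge0 ?ltW.
set s := sin _ in s_gt0 s_ge s_le *.
split.
  apply: le_trans (le_trans (Delta_polygon_ge R hn) _).
    by rewrite lee_fin ler_pM2r ?invr_gt0 ?mulr_gt0 //; lra.
  apply: ereal_sup_ubound; exists (@polygon R n) => //.
  by split; [exact: polygon_inj | exact: polygon_convex].
have -> : (4 - 2 * s) / (2 * s) = 2 / s - 1 by field; rewrite lt0r_neq0.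
suff : 2 * n%:R / pi <= 2 / s by lra.
rewrite ler_pdivrMr // mulrAC ler_pdivlMr //.
have : s * n%:R <= pi by rewrite -ler_pdivlMr.
nra.
Qed.
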